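(* Let $R$ be a $*$-ring with unity and let $a,b$ be central elements of $R$ generating the same ideal, i.e. $Ra=Rb$. Then the posets $(a]=\{x\in R: x\leq a\}$ and $(b]=\{x\in R: x\leq b\}$, ordered by the natural partial order, are order isomorphic.
   Context: The natural partial order on a $*$-ring $R$ with unity: $a\leq b$ iff there is $x\in R$ with $a=xa=xb=ax^*=bx^*$. *)

From HB Require Import structures.
From mathcomp Require Import all_boot all_algebra.
Set Implicit Arguments. Unset Strict Implicit. Unset Printing Implicit Defensive.
Import GRing.Theory.
Local Open Scope ring_scope.

Definition is_star (R : pzRingType) (star : R -> R) : Prop :=
  [/\ forall x y : R, star (x + y) = star x + star y,
      forall x y : R, star (x * y) = star y * star x
    & forall x : R, star (star x) = x].

Definition star_le (R : pzRingType) (star : R -> R) (a b : R) : Prop :=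
  exists x : R, [/\ a = x * a, a = x * b, a = a * star x & a = b * star x].

Definition central (R : pzRingType) (a : R) : Prop := forall y : R, a * y = y * a.

Definition in_left_ideal (R : pzRingType) (a x : R) : Prop := exists r : R, x = r * a.

Definition downset (R : pzRingType) (star : R -> R) (a : R) : Type :=
  {x : R | star_le star x a}.

Definition downsets_order_iso (R : pzRingType) (star : R -> R) (a b : R) : Prop :=
  exists f : downset star a -> downset star b,
    bijective f /\
    forall u v : downset star a,
      star_le star (proj1_sig u) (proj1_sig v) <->
      star_le star (proj1_sig (f u)) (proj1_sig (f v)).

(* Since a and b are central and Ra = Rb, there are s, t with a s = b and b t = a.
   On the ideal Ra right multiplication by s commutes with right multiplication by
   anything: c a w s = c w b = c a s w.  Hence a witness x of u <= v, with v in Ra,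
   also witnesses u s <= v s, so u |-> u s maps (a] monotonically into (b]; the map
   u |-> u t goes back, and u s t = u on Ra. *)

From mathcomp Require Import all_boot all_algebra.
From Stdlib Require Import ProofIrrelevance.
Set Implicit Arguments.
Unset Strict Implicit.
Import GRing.Theory.
Local Open Scope ring_scope.

Section LeftIdeal.
Variables (R : pzRingType) (star : R -> R).

Lemma in_left_ideal_mull (a c u : R) :
  in_left_ideal a u -> in_left_ideal a (c * u).
Proof. by move=> [r ->]; exists (c * r); rewrite mulrA. Qed.

Lemma star_le_in_left_ideal (u v : R) : star_le star u v -> in_left_ideal v u.
Proof. by move=> [x [_ -> _ _]]; exists x. Qed.

Lemma central_in_left_ideal (a b : R) :
  central a -> in_left_ideal a b -> exists s, a * s = b.
Proof. by move=> ca [r ->]; exists r; rewrite ca. Qed.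

Lemma in_left_ideal_mulrK (a s t u : R) :
  a * s * t = a -> in_left_ideal a u -> u * s * t = u.
Proof. by move=> ast [c ->]; rewrite -!mulrA (mulrA a) ast. Qed.

End LeftIdeal.

Section DownsetTransport.
Variables (R : pzRingType) (star : R -> R) (a b s : R).
Hypotheses (ca : central a) (cb : central b) (abs : a * s = b).

Lemma in_left_ideal_mulrAC (u w : R) :
  in_left_ideal a u -> u * w * s = u * s * w.
Proof.
move=> [c ->].
have -> : c * a * w * s = c * w * b by rewrite -(mulrA c a w) ca mulrA -mulrA abs.
by rewrite -(mulrA c a s) abs -(mulrA c b w) cb mulrA.
Qed.

Lemma star_le_mulr (u v : R) :
  in_left_ideal a v -> star_le star u v -> star_le star (u * s) (v * s).
Proof.
move=> av [x [uxu uxv uux uvx]].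
have au : in_left_ideal a u by rewrite uxv; exact: in_left_ideal_mull.
exists x; split.
- by rewrite mulrA -uxu.
- by rewrite mulrA -uxv.
- by rewrite {1}uux in_left_ideal_mulrAC.
- by rewrite {1}uvx in_left_ideal_mulrAC.
Qed.

Lemma star_le_downset_mulr (u : R) : star_le star u a -> star_le star (u * s) b.
Proof.
by rewrite -abs; apply: star_le_mulr; exists 1; rewrite mul1r.
Qed.

Definition downset_mulr (u : downset star a) : downset star b :=
  exist _ (proj1_sig u * s) (star_le_downset_mulr (proj2_sig u)).

Lemma downset_mulr_mono (u v : downset star a) :
  star_le star (proj1_sig u) (proj1_sig v) ->
  star_le star (proj1_sig (downset_mulr u)) (proj1_sig (downset_mulr v)).
Proof. by move=> /(star_le_mulr (star_le_in_left_ideal (proj2_sig v))). Qed.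

End DownsetTransport.

Lemma downset_mulrK (R : pzRingType) (star : R -> R) (a b s t : R)
    (ca : central a) (cb : central b) (abs : a * s = b) (bta : b * t = a) :
  cancel (@downset_mulr R star a b s ca cb abs) (downset_mulr cb ca bta).
Proof.
move=> [u au]; apply: subset_eq_compat.
by apply: (in_left_ideal_mulrK _ (star_le_in_left_ideal au)); rewrite abs bta.
Qed.

Theorem mainTheorem4 (R : pzRingType) (star : R -> R) (a b : R) :
  is_star star ->
  central a -> central b ->
  (forall x : R, in_left_ideal a x <-> in_left_ideal b x) ->
  downsets_order_iso star a b.
Proof.
move=> _ ca cb ab.
have [s abs] : exists s, a * s = b.
  by apply/central_in_left_ideal/ab => //; exists 1; rewrite mul1r.
have [t bta] : exists t, b * t = a.
  by apply/central_in_left_ideal/ab => //; exists 1; rewrite mul1r.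
pose f := @downset_mulr R star a b s ca cb abs.
pose g := @downset_mulr R star b a t cb ca bta.
have fK : cancel f g := downset_mulrK ca cb abs bta.
exists f; split; first by exists g; last exact: downset_mulrK.
move=> u v; split; first exact: downset_mulr_mono.
by rewrite -{2}(fK u) -{2}(fK v); apply: downset_mulr_mono.
Qed.
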